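(* Let $0<i_1<i_2<\cdots<i_L$ be integers and let $\mathcal S=\{x_0,x_{i_1},\ldots,x_{i_L}\}$, with associated restricted right-arm rotation distance $d_{RRA}^{\mathcal S}$ (rotations allowed only at the root and at the right-arm nodes at levels $i_1,\ldots,i_L$). Let $T_1,T_2$ be finite rooted binary trees with the same number of nodes, forming a (not necessarily reduced) tree pair diagram $(T_1,T_2)$ representing $w\in F$, and let $w'=x_{a_1}^{r_1}\cdots x_{a_k}^{r_k}x_{b_l}^{-s_l}\cdots x_{b_1}^{-s_1}$ be the partially reduced normal form of maximum length of $w$ obtained from $(T_1,T_2)$. If some $x_t^{\pm1}$ with $1\le t\le i_1-1$ appears in $w'$, then $d_{RRA}^{\mathcal S}(T_1,T_2)$ is not defined. Conversely, if no $x_t^{\pm1}$ with $1\le t\le i_1-1$ appears in $w'$, then $d_{RRA}^{\mathcal S}(T_1,T_2)$ is defined.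
   Context: Trees: finite rooted binary trees, each internal vertex (node) having a left and a right child; a tree with $n$ nodes has $n+1$ leaves numbered $0,\ldots,n$ from left to right. The right arm consists of the root and the nodes reachable from it by right edges only; the level of a node is its distance from the root. Right rotation at a node $N$ whose left child $M$ is a node (with $A,B$ the subtrees of $M$ and $C$ the right subtree of $N$) replaces the subtree at $N$ by one whose root has left subtree $A$ and right child a node with subtrees $B,C$; left rotation is the inverse. Thompson's group $F=\langle x_0,x_1,\ldots\mid x_i^{-1}x_nx_i=x_{n+1}\ (i<n)\rangle$. The leaf exponent of leaf $k$ is the length of the longest upward path of left edges from leaf $k$ none of whose vertices lies on the right arm. The word associated to a tree pair diagram $(T_1,T_2)$ (trees with the same number $n$ of nodes) is $x_0^{f_0}\cdots x_n^{f_n}x_n^{-e_n}\cdots x_0^{-e_0}$ with $e_i$, $f_i$ the leaf exponents of leaf $i$ in $T_1$, $T_2$; $(T_1,T_2)$ represents the element this word defines. This word is a normal form $x_{a_1}^{r_1}\cdots x_{a_k}^{r_k}x_{b_l}^{-s_l}\cdots x_{b_1}^{-s_1}$ ($r_i,s_i>0$, $0\le a_1<\cdots<a_k$, $0\le b_1<\cdots<b_l$), not necessarily unique. Such a normal form is partially reduced if for every $i>0$, whenever both $x_i$ and $x_i^{-1}$ occur, at least one of $x_{i+1}^{\pm1}$ occurs (no condition is imposed for $i=0$). The partially reduced normal form of maximum length is obtained from the associated word by repeatedly applying the reductions $u\,x_i\,\phi(v)\,x_i^{-1}\,z\mapsto u\,v\,z$ only for $i>0$, where $\phi(x_j)=x_{j+1}$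 and $\phi(v)$ involves only generators of index at least $i+2$. Restricted right-arm rotation distance $d_{RRA}^{\mathcal S}(T_1,T_2)$: the minimal number of rotations, each at a right-arm node at one of the levels $0,i_1,\ldots,i_L$, transforming $T_1$ into $T_2$ (trees keep their number of nodes throughout); it is defined if such a sequence exists. *)

From mathcomp Require Import all_boot.
Set Implicit Arguments. Unset Strict Implicit. Unset Printing Implicit Defensive.

Inductive tree : Type := Leaf | Node of tree & tree.

Fixpoint nodes (t : tree) : nat :=
  match t with Leaf => 0 | Node l r => (nodes l + nodes r).+1 end.

(** Leaf exponents.  [lexp a t]: leaf exponents (left to right) of the leaves
    of a subtree [t] none of whose vertices lies on the right arm, where [a] is
    the length of the maximal upward path of left edges starting at the root of
    [t] through vertices not on the right arm. *)
Fixpoint lexp (a : nat) (t : tree) : seq nat :=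
  match t with
  | Leaf => [:: a]
  | Node l r => lexp a.+1 l ++ lexp 0 r
  end.

(** [leaf_exps t]: the leaf exponents of leaves 0..n of the tree [t]
    (the vertices visited by [leaf_exps] recursion on the right are the
    right-arm nodes; their left subtrees start with path length 0, since the
    parent lies on the right arm). *)
Fixpoint leaf_exps (t : tree) : seq nat :=
  match t with
  | Leaf => [:: 0]
  | Node l r => lexp 0 l ++ leaf_exps r
  end.

(** Words in the generators x_0, x_1, ...: a letter (i, true) is x_i,
    a letter (i, false) is x_i^{-1}. *)
Definition letter := (nat * bool)%type.
Definition word := seq letter.

(** The word associated to (T1, T2):
    x_0^{f_0} ... x_n^{f_n} x_n^{-e_n} ... x_0^{-e_0},
    e = leaf exponents of T1, f = leaf exponents of T2. *)
Definition assoc_word (T1 T2 : tree) : word :=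
  let e := leaf_exps T1 in
  let f := leaf_exps T2 in
  flatten [seq nseq (nth 0 f i) (i, true) | i <- iota 0 (size f)] ++
  flatten [seq nseq (nth 0 e i) (i, false) | i <- rev (iota 0 (size e))].

Definition shift_letter (a : letter) : letter := (a.1.+1, a.2).

(** One reduction  u x_i phi(v) x_i^{-1} z  |->  u v z  with i > 0 and
    phi(v) involving only generators of index >= i+2. *)
Definition red_step (w w' : word) : Prop :=
  exists (u v z : word) (i : nat),
    [/\ 0 < i, all (fun a : letter => i.+2 <= (shift_letter a).1) v,
        w = u ++ (i, true) :: map shift_letter v ++ (i, false) :: z
      & w' = u ++ v ++ z].

Inductive rtc {A : Type} (R : A -> A -> Prop) : A -> A -> Prop :=
  | rtc_refl x : rtc R x x
  | rtc_step x y z : R x y -> rtc R y z -> rtc R x z.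

Definition partially_reduced (w : word) : Prop :=
  forall i : nat, 0 < i -> (i, true) \in w -> (i, false) \in w ->
    ((i.+1, true) \in w) || ((i.+1, false) \in w).

Definition rot_right (t : tree) : option tree :=
  match t with
  | Node (Node A B) C => Some (Node A (Node B (C)))
  | _ => None
  end.

Definition rot_left (t : tree) : option tree :=
  match t with
  | Node A (Node B C) => Some (Node (Node A B) C)
  | _ => None
  end.

(** Apply [f] at the right-arm node at level [k] (reached from the root by
    [k] right edges). *)
Fixpoint at_level (k : nat) (f : tree -> option tree) (t : tree) : option tree :=
  match k with
  | 0 => f t
  | k'.+1 =>
      match t with
      | Node l r => option_map (Node l) (at_level k' f r)
      | Leaf => None
      end
  end.

(** One rotation at a right-arm node at one of the levels 0, i_1, ..., i_L
    (the list [lv] is [i_1; ...; i_L]). *)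
Definition rra_step (lv : seq nat) (t t' : tree) : Prop :=
  exists k : nat, ((k == 0) || (k \in lv)) /\
    (at_level k rot_right t = Some t' \/ at_level k rot_left t = Some t').

Definition d_RRA_defined (lv : seq nat) (T1 T2 : tree) : Prop :=
  rtc (rra_step lv) T1 T2.

(** Right rotations at the root turn [Node l r] into a tree whose root has a
    leaf as left child and which has the same leaf exponents from leaf 1 on;
    [rra_key (i1 - 1) T] is the part of these exponents describing the left
    subtrees of the right-arm nodes at levels 1, ..., i1 - 1 of that tree.
    Rotations at the root do not change the exponents from leaf 1 on and
    rotations at levels >= i1 do not touch those subtrees, so the key is an
    invariant of d_RRA.  Conversely, root rotations conjugate a rotation at
    level k + 1 > i1 into one at level k, so every rotation at a level >= i1 is
    available, and these connect any two trees of the same size and key.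

    On the word side, a reduction x_i phi(v) x_i^-1 |-> v with i > 0 turns both
    exponent vectors of the word (initially the leaf exponents of T2 and T1)
    from a ++ x :: 0 :: b into a ++ (x - 1) :: b, and this preserves whether
    their keys agree.  In a partially reduced word the keys agree iff no x_t
    with 1 <= t < i1 occurs: otherwise the last positive entry of the common
    key is followed by a 0, giving an index t with x_t and x_t^-1 present and
    x_(t+1) absent. *)

From mathcomp Require Import all_boot zify.
Set Implicit Arguments. Unset Strict Implicit. Unset Printing Implicit Defensive.

Lemma rtc1 A (R : A -> A -> Prop) x y : R x y -> rtc R x y.
Proof. by move=> Rxy; apply: rtc_step Rxy (rtc_refl _ _). Qed.

Lemma rtc_trans A (R : A -> A -> Prop) x y z :
  rtc R x y -> rtc R y z -> rtc R x z.
Proof. by elim=> // a b c Rab _ IH /IH; apply: rtc_step. Qed.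

Lemma rtc_sub A (R S : A -> A -> Prop) x y :
  (forall a b, R a b -> rtc S a b) -> rtc R x y -> rtc S x y.
Proof.
by move=> RS; elim=> [a|a b c /RS Sab _]; [exact: rtc_refl | exact: rtc_trans Sab].
Qed.

Lemma rtc_sym A (R : A -> A -> Prop) x y :
  (forall a b, R a b -> R b a) -> rtc R x y -> rtc R y x.
Proof.
move=> Rsym; elim=> [a|a b c /Rsym Rba _ IH]; first exact: rtc_refl.
exact: rtc_trans IH (rtc1 Rba).
Qed.

Lemma rtc_map A B (R : A -> A -> Prop) (S : B -> B -> Prop) (f : A -> B) x y :
  (forall a b, R a b -> S (f a) (f b)) -> rtc R x y -> rtc S (f x) (f y).
Proof.
by move=> RS; elim=> [a|a b c /RS Sab _]; [exact: rtc_refl | exact: rtc_step Sab].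
Qed.

Lemma rtc_preserve A (R : A -> A -> Prop) (P : A -> Prop) x y :
  (forall a b, R a b -> P a -> P b) -> rtc R x y -> P x -> P y.
Proof. by move=> RP; elim=> // a b c /RP Pab _ IH /Pab. Qed.

(** Read as the leaf exponents of a tree from left to right, [arm_prefix c s]
    keeps the exponents of the leaves in the left subtrees of the first [c]
    right-arm nodes: [c] counts the subtrees still to be read; each leaf
    completes one of them, and a leaf of exponent [x] is the leftmost leaf of
    [x] nodes whose right subtrees are still to be read. *)
Fixpoint arm_prefix (c : nat) (s : seq nat) : seq nat :=
  match c, s with
  | c'.+1, x :: s' => x :: arm_prefix (c' + x) s'
  | _, _ => [::]
  end.

Lemma arm_prefix0 s : arm_prefix 0 s = [::].
Proof. by case: s. Qed.

Lemma arm_prefix_lexp a t c s :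
  arm_prefix c.+1 (lexp a t ++ s) = lexp a t ++ arm_prefix (c + a) s.
Proof.
elim: t a c s => [//|l IHl r IHr] a c s /=.
by rewrite -catA IHl -addSnnS IHr addn0 catA.
Qed.

Lemma nth_arm_prefix c s j :
  j < size (arm_prefix c s) -> nth 0 (arm_prefix c s) j = nth 0 s j.
Proof.
elim: s c j => [|x s IH] [|c] [|j] //=; exact: IH.
Qed.

Lemma size_arm_prefix c s : minn c (size s) <= size (arm_prefix c s).
Proof.
elim: s c => [|x s IH] [|c] //=; rewrite minnSS ltnS.
by apply: leq_trans (IH (c + x)); lia.
Qed.

Lemma arm_prefix_zeros c s :
  (forall j, j < c -> nth 0 s j = 0) -> arm_prefix c s = nseq (minn c (size s)) 0.
Proof.
elim: s c => [|x s IH] [|c] s0 //=; rewrite minnSS.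
have x0 : x = 0 by exact: (s0 0).
by rewrite x0 addn0 IH // => j ltjc; exact: (s0 j.+1).
Qed.

(** After a positive entry the counter is still positive, so the prefix
    goes on. *)
Lemma arm_prefix_peak c s :
  has (leq 1) (arm_prefix c s) -> last 0 s = 0 ->
  exists j, [/\ 0 < nth 0 s j, nth 0 s j.+1 = 0 & j.+1 < size (arm_prefix c s)].
Proof.
elim: s c => [|x s IH] [|c] //= pos last0.
have [tail_pos|tail_nonpos] := boolP (has (leq 1) (arm_prefix (c + x) s)).
  have s_last : last 0 s = 0 by case: s {IH pos} tail_pos last0.
  by have [j [*]] := IH _ tail_pos s_last; exists j.+1.
have x_pos : 0 < x by move: pos; rewrite (negbTE tail_nonpos) orbF.
case: s {IH pos} tail_nonpos last0 => [_ /= x0|y s]; first by rewrite x0 in x_pos.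
rewrite -(prednK (_ : 0 < c + x)) ?addn_gt0 ?x_pos ?orbT //=.
by case: y => [|y] //= _ _; exists 0.
Qed.

(** What a reduction [x_i phi(v) x_i^-1 |-> v] does to either exponent vector. *)
Definition exps_red (i : nat) (s s' : seq nat) : Prop :=
  exists a x b, [/\ size a = i, 0 < x, s = a ++ x :: 0 :: b & s' = a ++ x.-1 :: b].

Lemma exps_red_behead i s s' :
  0 < i -> exps_red i s s' -> exps_red i.-1 (behead s) (behead s').
Proof.
move=> i_pos [[|y a] [x [b [sz x_pos -> ->]]]]; first by rewrite -sz in i_pos.
by exists a, x, b; rewrite -sz.
Qed.

Lemma arm_prefix_contract c a x b : 0 < x ->
  (arm_prefix c (a ++ x.-1 :: b) = arm_prefix c (a ++ x :: 0 :: b)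
     /\ size (arm_prefix c (a ++ x :: 0 :: b)) <= size a)
  \/ (exists d e, [/\ arm_prefix c (a ++ x :: 0 :: b) = d ++ x :: 0 :: e,
        arm_prefix c (a ++ x.-1 :: b) = d ++ x.-1 :: e & size d = size a]).
Proof.
move=> x_pos; elim: a c => [|y a IH] [|c] /=; try by left.
- right; exists [::], (arm_prefix (c + x.-1) b); split=> //=.
  by rewrite -(prednK x_pos) addnS /= addn0.
- have [[-> le_sz]|[d [e [-> -> sz]]]] := IH (c + y); first by left.
  by right; exists (y :: d), e; rewrite /= sz.
Qed.

Lemma arm_prefix_red c i s s' t t' : exps_red i s s' -> exps_red i t t' ->
  (arm_prefix c s = arm_prefix c t <-> arm_prefix c s' = arm_prefix c t').
Proof.
move=> [a [x [b [sza x_pos -> ->]]]] [a' [x' [b' [sza' x'_pos -> ->]]]].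
have [[-> le_s]|[d [e [-> -> szd]]]] := arm_prefix_contract c a b x_pos;
have [[-> le_t]|[d' [e' [-> -> szd']]]] := arm_prefix_contract c a' b' x'_pos => //.
- by split=> eq_st; move: le_s; rewrite eq_st size_cat /=; lia.
- by split=> eq_st; move: le_t; rewrite -eq_st size_cat /=; lia.
have sz_dd : size d = size d' by rewrite szd szd' sza sza'.
split=> /eqP; rewrite eqseq_cat // => /andP[/eqP-> /eqP[]].
  by move=> -> ->.
by move=> /(congr1 S); rewrite !prednK // => -> ->.
Qed.

Fixpoint ballot (s : seq nat) : bool :=
  if s is x :: s' then (x + sumn s' <= size s') && ballot s' else true.

Lemma ballot_sumn s : ballot s -> sumn s <= size s.
Proof. by case: s => //= x s /andP[le_s _]; apply: leqW. Qed.

Lemma ballot_cat s t : ballot s -> ballot t -> ballot (s ++ t).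
Proof.
move=> bs bt; elim: s bs => //= x s IH /andP[le_s /IH ->].
by rewrite sumn_cat size_cat addnA leq_add ?ballot_sumn.
Qed.

Lemma ballot_behead s : ballot s -> ballot (behead s).
Proof. by case: s => //= x s /andP[]. Qed.

Lemma ballot_last s : ballot s -> last 0 s = 0.
Proof.
elim: s => //= x [|y s] IH /andP[]; first by rewrite addn0 leqn0 => /eqP.
by move=> _ /IH.
Qed.

Lemma size_lexp a t : size (lexp a t) = (nodes t).+1.
Proof. by elim: t a => //= l IHl r IHr a; rewrite size_cat IHl IHr addSn addnS. Qed.

Lemma sumn_lexp a t : sumn (lexp a t) = a + nodes t.
Proof.
by elim: t a => [|l IHl r IHr] a /=; rewrite ?sumn_cat ?IHl ?IHr; lia.
Qed.

Lemma ballot_lexp t : ballot (lexp 0 t).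
Proof.
have ballot_cons u : ballot (behead (lexp 0 u)) -> ballot (lexp 0 u).
  have := sumn_lexp 0 u; have := size_lexp 0 u.
  by case: (lexp 0 u) => //= x s [->] ->; rewrite leqnn.
apply: (ballot_cons); elim: t 0 => //= l IHl r IHr a.
have := IHl a.+1; case: (lexp a.+1 l) (size_lexp a.+1 l) => //= x s _ bs.
exact: ballot_cat bs (ballot_cons _ (IHr 0)).
Qed.

Lemma ballot_leaf_exps T : ballot (leaf_exps T).
Proof. by elim: T => //= l _ r IHr; apply: ballot_cat (ballot_lexp l) IHr. Qed.

Lemma ballot_red i s s' : exps_red i s s' -> ballot s -> ballot s'.
Proof.
move=> [a [x [b [_ x_pos -> ->]]]]; elim: a => [|y a IH] /=.
  by move=> /and3P[le_x _ ->]; rewrite andbT; lia.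
by move=> /andP[le_y /IH ->]; rewrite andbT !sumn_cat !size_cat /= in le_y *; lia.
Qed.

Fixpoint arm (ls : seq tree) (r : tree) : tree :=
  if ls is l :: ls' then Node l (arm ls' r) else r.

Fixpoint lspine (t : tree) : seq tree :=
  if t is Node l r then lspine l ++ [:: r] else [::].

Lemma arm_cat ls ls' r : arm (ls ++ ls') r = arm ls (arm ls' r).
Proof. by elim: ls => //= l ls ->. Qed.

Lemma nodes_arm_lspine l r : nodes (arm (lspine l) r) = nodes l + nodes r.
Proof. by elim: l r => //= A IHA B _ r; rewrite arm_cat IHA /=; lia. Qed.

Lemma behead_lexp a b t s : behead (lexp a t ++ s) = behead (lexp b t ++ s).
Proof. by elim: t a b s => //= l IHl r _ a b s; rewrite -!catA (IHl _ b.+1). Qed.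

Lemma behead_leaf_exps_Node l r :
  behead (leaf_exps (Node l r)) = leaf_exps (arm (lspine l) r).
Proof.
elim: l r => //= A IHA B _ r.
by rewrite arm_cat /= -IHA /= -catA (behead_lexp 1 0).
Qed.

Lemma lexp_head a t s : a <= head 0 (lexp a t ++ s).
Proof. by elim: t a s => //= l IHl r _ a s; rewrite -catA ltnW ?IHl. Qed.

Lemma lexp_inj a t t' s s' : lexp a t ++ s = lexp a t' ++ s' -> t = t' /\ s = s'.
Proof.
elim: t a t' s s' => [|l IHl r IHr] a [|l' r'] s s' /=; rewrite -?catA.
- by case=> <-.
- by move=> /(congr1 (head 0)) /= eq_a; have := lexp_head a.+1 l' (lexp 0 r' ++ s'); lia.
- by move=> /(congr1 (head 0)) /= eq_a; have := lexp_head a.+1 l (lexp 0 r ++ s); lia.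
by move=> /IHl[-> /IHr[-> ->]].
Qed.

Definition rot_at (k : nat) (t t' : tree) : Prop :=
  at_level k rot_right t = Some t' \/ at_level k rot_left t = Some t'.

Lemma at_level_inv k (f g : tree -> option tree) t t' :
  (forall u u', f u = Some u' -> g u' = Some u) ->
  at_level k f t = Some t' -> at_level k g t' = Some t.
Proof.
move=> fK; elim: k t t' => [|k IH] [|l r] t' //=; try exact: fK.
by case E: (at_level k f r) => [r'|] //= [<-] /=; rewrite (IH _ _ E).
Qed.

Lemma rot_rightK t t' : rot_right t = Some t' -> rot_left t' = Some t.
Proof. by case: t => [//|[//|A B] C] [<-]. Qed.

Lemma rot_leftK t t' : rot_left t = Some t' -> rot_right t' = Some t.
Proof. by case: t => [//|A [//|B C]] [<-]. Qed.

Lemma rot_at_sym k t t' : rot_at k t t' -> rot_at k t' t.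
Proof.
by case=> rot; [right; apply: at_level_inv rot_rightK rot
              | left; apply: at_level_inv rot_leftK rot].
Qed.

Lemma rot_atS k l r t' :
  rot_at k.+1 (Node l r) t' <-> exists2 r', rot_at k r r' & t' = Node l r'.
Proof.
rewrite /rot_at /=; split=> [[]|[r' [] -> ->]]; [| |by left|by right].
  by case E: (at_level k rot_right r) => [r'|] //= [<-]; exists r'; first left.
by case E: (at_level k rot_left r) => [r'|] //= [<-]; exists r'; first right.
Qed.

Lemma rot_at_arm ls k r r' :
  rot_at k r r' -> rot_at (size ls + k) (arm ls r) (arm ls r').
Proof. by elim: ls => //= l ls IH /IH rot; apply/rot_atS; exists (arm ls r'). Qed.

Lemma arm_prefix_rot_at c k t t' :
  c <= k -> rot_at k t t' -> arm_prefix c (leaf_exps t) = arm_prefix c (leaf_exps t').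
Proof.
elim: k c t t' => [|k IH] [|c] t t' //= le_ck; rewrite ?arm_prefix0 //.
case: t => [|l r]; first by case.
by move=> /rot_atS[r' rot ->] /=; rewrite !arm_prefix_lexp addn0 (IH _ _ _ le_ck rot).
Qed.

Definition rra_key (c : nat) (T : tree) : seq nat :=
  arm_prefix c (behead (leaf_exps T)).

Lemma behead_leaf_exps_rot_root T T' :
  rot_at 0 T T' -> behead (leaf_exps T) = behead (leaf_exps T').
Proof.
have rot_r U U' : rot_right U = Some U' -> behead (leaf_exps U) = behead (leaf_exps U').
  by case: U => [//|[//|A B] C] [<-] /=; rewrite -!catA (behead_lexp 1 0).
by case=> [/rot_r|/rot_leftK /rot_r ->].
Qed.

Lemma rra_key_rot_at c k T T' :
  (k == 0) || (c < k) -> rot_at k T T' -> rra_key c T = rra_key c T'.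
Proof.
case: k => [_ /behead_leaf_exps_rot_root|k /= lt_ck]; first by rewrite /rra_key => ->.
case: T => [|l r]; first by case.
move=> /rot_atS[r' rot ->]; rewrite /rra_key !behead_leaf_exps_Node.
by apply: arm_prefix_rot_at (rot_at_arm _ rot); lia.
Qed.

Lemma rra_key_rtc i1 irest T T' : sorted ltn (i1 :: irest) ->
  rtc (rra_step (i1 :: irest)) T T' -> rra_key i1.-1 T = rra_key i1.-1 T'.
Proof.
move=> sorted_lv; have i1_min : {in irest, forall k, i1 < k}.
  by apply/allP; exact: order_path_min ltn_trans sorted_lv.
elim=> // U U' U'' [k [lv_k rot]] _ <-; apply: rra_key_rot_at rot.
case: (posnP k) lv_k => [-> //|k_pos]; rewrite in_cons /= => lv_k.
have le_i1k : i1 <= k by case/orP: lv_k => [/eqP-> | /i1_min /ltnW].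
lia.
Qed.

Lemma flatten_root l r : rtc (rot_at 0) (Node l r) (Node Leaf (arm (lspine l) r)).
Proof.
elim: l r => [|A IHA B _] r; first exact: rtc_refl.
apply: rtc_step (_ : rot_at 0 _ (Node A (Node B r))) _; first by left.
by rewrite /= arm_cat; exact: IHA.
Qed.

Definition rot_from (c : nat) (t t' : tree) : Prop := exists2 k, c <= k & rot_at k t t'.

Lemma rot_from_Node c l r r' :
  rtc (rot_from c) r r' -> rtc (rot_from c.+1) (Node l r) (Node l r').
Proof.
by apply: rtc_map => a b [k le_ck rot]; exists k.+1 => //; apply/rot_atS; exists b.
Qed.

Fixpoint vine (n : nat) : tree := if n is n'.+1 then Node Leaf (vine n') else Leaf.

Lemma rtc_vine n t : nodes t <= n -> rtc (rot_from 0) t (vine (nodes t)).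
Proof.
elim: n t => [|n IH] [|l r] //= le_n; try exact: rtc_refl.
apply: rtc_trans (rtc_sub _ (flatten_root l r)) _ => [a b rot|].
  by apply: rtc1; exists 0.
rewrite -nodes_arm_lspine.
apply: (rtc_sub _ (rot_from_Node Leaf (IH _ _))) => [a b [k _ rot]|].
  by apply: rtc1; exists k.
by rewrite nodes_arm_lspine.
Qed.

Lemma rot_connected t t' : nodes t = nodes t' -> rtc (rot_from 0) t t'.
Proof.
move=> eq_n; apply: rtc_trans (rtc_vine (leqnn _)) _; rewrite eq_n.
by apply: rtc_sym (rtc_vine (leqnn _)) => a b [k le_k /rot_at_sym rot]; exists k.
Qed.

Lemma rot_from_connected c t t' : nodes t = nodes t' ->
  arm_prefix c (leaf_exps t) = arm_prefix c (leaf_exps t') -> rtc (rot_from c) t t'.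
Proof.
elim: c t t' => [|c IH] t t' eq_n; first by move=> _; exact: rot_connected.
case: t t' eq_n => [|l r] [|l' r'] //= eq_n; first by move=> _; exact: rtc_refl.
rewrite !arm_prefix_lexp !addn0 => /lexp_inj[eq_l eq_r]; subst l'.
by apply: rot_from_Node; apply: IH eq_r; lia.
Qed.

(** A rotation at a level [k > i1] is conjugate, by a root rotation, to one at
    level [k - 1]. *)
Lemma rot_at_rra i1 irest k T T' : 0 < i1 -> i1 <= k ->
  rot_at k T T' -> rtc (rra_step (i1 :: irest)) T T'.
Proof.
move=> i1_pos; elim: k T T' => [|k IH] T T' le_i1k; first by case: i1 i1_pos le_i1k.
move: le_i1k; rewrite leq_eqVlt => /orP[/eqP<- rot|lt_i1k].
  by apply: rtc1; exists i1; rewrite mem_head orbT.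
case: k IH lt_i1k => [|k] IH lt_i1k; first by move: i1_pos lt_i1k; case: (i1).
case: T => [|l0 [|l1 r]]; [by case | by move=> /rot_atS[? []] |].
move=> /rot_atS[_ /rot_atS[r' rot ->] ->].
apply: rtc_step (_ : rra_step _ _ (Node (Node l0 l1) r)) _.
  by exists 0; split=> //; right.
apply: rtc_trans (IH _ (Node (Node l0 l1) r') lt_i1k _) _; first by apply/rot_atS; exists r'.
by apply: rtc1; exists 0; split=> //; left.
Qed.

Lemma rra_connected i1 irest T1 T2 : 0 < i1 -> nodes T1 = nodes T2 ->
  rra_key i1.-1 T1 = rra_key i1.-1 T2 -> d_RRA_defined (i1 :: irest) T1 T2.
Proof.
move=> i1_pos; case: T1 T2 => [|l1 r1] [|l2 r2] //= eq_n.
  by move=> _; exact: rtc_refl.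
rewrite /rra_key !behead_leaf_exps_Node => /rot_from_connected eq_arms.
have root_rra t t' : rtc (rot_at 0) t t' -> rtc (rra_step (i1 :: irest)) t t'.
  by apply: rtc_sub => a b rot; apply: rtc1; exists 0.
apply: rtc_trans (root_rra _ _ (flatten_root l1 r1)) _.
apply: rtc_trans (root_rra _ _ (rtc_sym (@rot_at_sym 0) (flatten_root l2 r2))).
have eq_nodes : nodes (arm (lspine l1) r1) = nodes (arm (lspine l2) r2).
  by rewrite !nodes_arm_lspine; lia.
have := rot_from_Node Leaf (eq_arms eq_nodes); rewrite prednK //.
by apply: rtc_sub => a b [k le_k rot]; exact: rot_at_rra rot.
Qed.

Definition mult (w : word) (k : nat) (b : bool) : nat := count_mem (k, b) w.

Definition exps (w : word) (b : bool) (N : nat) : seq nat := mkseq (mult w ^~ b) N.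

Lemma mem_mult w k b : ((k, b) \in w) = (0 < mult w k b).
Proof. by rewrite -has_pred1 has_count. Qed.

Lemma mult_cat s t k b : mult (s ++ t) k b = mult s k b + mult t k b.
Proof. exact: count_cat. Qed.

Lemma mult_out (p : pred nat) w :
  all (fun a : letter => p a.1) w -> forall k b, ~~ p k -> mult w k b = 0.
Proof.
move=> /allP w_p k b not_pk; apply/count_memPn/negP => /w_p /=.
by rewrite (negbTE not_pk).
Qed.

Lemma mult_shift v k b : mult (map shift_letter v) k.+1 b = mult v k b.
Proof.
by rewrite /mult count_map; apply: eq_count => -[j c]; rewrite /= !xpair_eqE.
Qed.

Lemma nth_exps w b N k :
  all (fun a : letter => a.1 < N) w -> nth 0 (exps w b N) k = mult w k b.
Proof.
move=> w_lt; case: (ltnP k N) => [lt_kN|le_Nk]; first by rewrite nth_mkseq.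
rewrite nth_default ?size_mkseq //; symmetry.
by apply: (mult_out (p := gtn N)) => //=; rewrite -leqNgt.
Qed.

Lemma mkseqD (T : Type) (f : nat -> T) m n :
  mkseq f (m + n) = mkseq f m ++ mkseq (fun k => f (m + k)) n.
Proof. by rewrite /mkseq iotaD map_cat add0n -{2}[m]addn0 iotaDl -map_comp. Qed.

Section Reduction.

Variables (u v z : word) (i : nat).
Hypotheses (u_le : all (fun a : letter => a.1 <= i) u)
           (z_le : all (fun a : letter => a.1 <= i) z)
           (v_gt : all (fun a : letter => i < a.1) v).

Let w := u ++ (i, true) :: map shift_letter v ++ (i, false) :: z.
Let w' := u ++ v ++ z.

Let mult_w k b :
  mult w k b = mult u k b + ((i, true) == (k, b)) + mult (map shift_letter v) k b
               + ((i, false) == (k, b)) + mult z k b.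
Proof. by rewrite /mult count_cat /= count_cat /= !addnA. Qed.

Let shift_v_gt : all (fun a : letter => i.+1 < a.1) (map shift_letter v).
Proof. by rewrite all_map. Qed.

Lemma mult_red_le k b : k <= i -> mult w' k b = mult w k b - (k == i).
Proof.
move=> le_ki; rewrite mult_w !mult_cat (mult_out v_gt) -?leqNgt //.
rewrite (mult_out shift_v_gt) -?leqNgt ?(leqW le_ki) // !xpair_eqE eq_sym.
by case: eqP => _; case: b => /=; lia.
Qed.

Lemma mult_red_gt k b : i < k -> mult w' k b = mult w k.+1 b.
Proof.
move=> lt_ik; rewrite mult_w mult_shift !mult_cat !xpair_eqE.
have le_ik : i <= k by apply: ltnW.
rewrite !(mult_out (p := geq i) u_le) ?(mult_out (p := geq i) z_le) -?ltnNge ?ltnS //.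
by rewrite ltn_eqF ?ltnS //= !(addn0, add0n).
Qed.

Lemma mult_red_succ b : mult w i.+1 b = 0.
Proof.
rewrite mult_w !xpair_eqE (ltn_eqF (ltnSn i)) (mult_out (p := geq i) u_le) -?ltnNge //.
by rewrite (mult_out (p := geq i) z_le) -?ltnNge // (mult_out shift_v_gt) ?ltnn.
Qed.

Lemma mult_red_pos b : 0 < mult w i b.
Proof. by rewrite mult_w !xpair_eqE eqxx; case: b; lia. Qed.

Lemma exps_red_step b K : exps_red i (exps w b (i + K.+2)) (exps w' b (i + K.+1)).
Proof.
exists (exps w b i), (mult w i b), (mkseq (fun k => mult w (i.+2 + k) b) K).
split; [exact: size_mkseq | exact: mult_red_pos | |].
  by rewrite /exps -!addSnnS mkseqD !mkseqS mult_red_succ -!cats1 -!catA.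
rewrite /exps -addSnnS mkseqD mkseqS -cats1 -catA mult_red_le // eqxx subn1.
congr (_ ++ _ :: _).
  apply/eq_in_map => k; rewrite mem_iota add0n => lt_ki.
  by rewrite mult_red_le ?(ltn_eqF lt_ki) ?subn0 // ltnW.
by apply: eq_mkseq => k; rewrite mult_red_gt ?addSn // ltnS leq_addr.
Qed.

End Reduction.

(** [pairwise nf_order w]: [w] has the shape of a normal form, its positive
    letters with nondecreasing indices followed by its negative letters with
    nonincreasing indices. *)
Definition nf_order (a c : letter) : bool :=
  match a.2, c.2 with
  | true, true => a.1 <= c.1
  | true, false => true
  | false, true => false
  | false, false => c.1 <= a.1
  end.

Lemma nf_order_trans : transitive nf_order.
Proof. by move=> [? []] [? []] [? []]; rewrite /nf_order //=; lia. Qed.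

Lemma nf_order_around i a : i <= a.1 -> nf_order (i, true) a && nf_order a (i, false).
Proof. by case: a => j []; rewrite /nf_order /= ?andbT. Qed.

Lemma nf_order_shift : relpre shift_letter nf_order =2 nf_order.
Proof. by move=> [j []] [k []]. Qed.

Lemma red_step_nf w w' : pairwise nf_order w -> red_step w w' ->
  pairwise nf_order w' /\
  exists u v z i, [/\ w = u ++ (i, true) :: map shift_letter v ++ (i, false) :: z,
    w' = u ++ v ++ z, 0 < i, all (fun a : letter => a.1 <= i) (u ++ z)
    & all (fun a : letter => i < a.1) v].
Proof.
move=> nf_w [u [v [z [i [i_pos v_gt eq_w ->]]]]].
rewrite eq_w pairwise_cat allrel_consr pairwise_cons pairwise_cat pairwise_cons in nf_w.
case/and3P: nf_w => /andP[u_pos _] nf_u /andP[_ /and3P[_ nf_v /andP[z_neg nf_z]]].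
have {}v_gt : all (fun a : letter => i < a.1) v by apply: sub_all v_gt => -[j c].
split; last first.
  exists u, v, z, i; split=> //; rewrite all_cat; apply/andP; split.
    by apply: sub_all u_pos => -[j []].
  by apply: sub_all z_neg => -[j []].
rewrite !pairwise_cat allrel_catr nf_u nf_z.
have -> /= : pairwise nf_order v.
  by move: nf_v; rewrite pairwise_map; apply: sub_pairwise => a c; rewrite nf_order_shift.
rewrite andbT -andbA; apply/and3P; split; apply/allrelP => a c a_in c_in.
- move/allP: u_pos => /(_ a a_in) au; move/allP: v_gt => /(_ c c_in) /ltnW /nf_order_around.
  by case/andP=> /(nf_order_trans au).
- move/allP: u_pos => /(_ a a_in) au; move/allP: z_neg => /(_ c c_in) zc.
  by apply: nf_order_trans au (nf_order_trans _ zc).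
- move/allP: z_neg => /(_ c c_in) zc; move/allP: v_gt => /(_ a a_in) /ltnW /nf_order_around.
  by case/andP=> _ /nf_order_trans; apply.
Qed.

Definition nf_inv (w : word) (N : nat) : Prop :=
  [/\ pairwise nf_order w, all (fun a : letter => a.1 < N) w,
      ballot (exps w true N) & ballot (exps w false N)].

Definition exps_agree (c : nat) (w : word) (N : nat) : Prop :=
  arm_prefix c (behead (exps w false N)) = arm_prefix c (behead (exps w true N)).

Lemma nf_inv_last w N b : nf_inv w N -> mult w N.-1 b = 0.
Proof.
case=> _ w_lt ballot_t ballot_f.
rewrite -(nth_exps _ _ w_lt) -{2}(size_mkseq (mult w ^~ b) N) nth_last.
by apply: ballot_last; case: b.
Qed.

Lemma nf_inv_red_step w w' N : nf_inv w N -> red_step w w' ->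
  nf_inv w' N.-1 /\ exists2 i, 0 < i & forall b, exps_red i (exps w b N) (exps w' b N.-1).
Proof.
move=> inv red; have [nf_w w_lt ballot_t ballot_f] := inv.
have [nf_w' [u [v [z [i [eq_w eq_w' i_pos]]]]]] := red_step_nf nf_w red.
rewrite all_cat => /andP[u_le z_le] v_gt.
have lt_iN : i < N.-1.
  have lt_iN : i < N.
    by move/allP: w_lt => /(_ (i, true)); apply; rewrite eq_w mem_cat mem_head orbT.
  have := mult_red_pos u_le z_le v_gt true; rewrite -eq_w.
  have := nf_inv_last true inv.
  by case: (ltngtP i N.-1) => // [|<- -> //]; lia.
have exps_step b : exps_red i (exps w b N) (exps w' b N.-1).
  have [K ->] : exists K, N = i + K.+2 by exists (N - i.+2); lia.
  rewrite (_ : (i + K.+2).-1 = i + K.+1); last by lia.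
  by rewrite eq_w eq_w'; apply: exps_red_step.
split; last by exists i.
split=> //; [|exact: ballot_red (exps_step true) ballot_t
             |exact: ballot_red (exps_step false) ballot_f].
rewrite eq_w' !all_cat; apply/and3P; split.
- by apply: sub_all u_le => a /=; lia.
- apply/allP => a a_v; move/allP: w_lt => /(_ (shift_letter a)).
  by rewrite eq_w mem_cat in_cons mem_cat (map_f _ a_v) !orbT => /(_ isT) /=; lia.
- by apply: sub_all z_le => a /=; lia.
Qed.

Lemma nf_inv_rtc c w w' N : nf_inv w N -> rtc red_step w w' ->
  exists N', nf_inv w' N' /\ (exps_agree c w N <-> exps_agree c w' N').
Proof.
move=> inv red.
pose P u := exists M, nf_inv u M /\ (exps_agree c w N <-> exps_agree c u M).
apply: (rtc_preserve (P := P) _ red); last by exists N.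
move=> u u' red_u [M [inv_u agree_u]].
have [inv_u' [i i_pos exps_u]] := nf_inv_red_step inv_u red_u.
exists M.-1; split=> //; rewrite agree_u /exps_agree.
by apply: (@arm_prefix_red c i.-1); exact: exps_red_behead i_pos (exps_u _).
Qed.

Lemma exps_agree_iff c w N : nf_inv w N -> partially_reduced w ->
  (exps_agree c w N <-> ~ exists t b, 1 <= t <= c /\ (t, b) \in w).
Proof.
move=> inv red_w; have [_ w_lt ballot_t ballot_f] := inv.
have nth_exps' b j : nth 0 (behead (exps w b N)) j = mult w j.+1 b.
  by rewrite nth_behead nth_exps.
rewrite /exps_agree; split=> [agree [t [b [/andP[t_pos le_tc] t_in]]]|no_letter]; last first.
  have zeros b j : j < c -> nth 0 (behead (exps w b N)) j = 0.
    move=> lt_jc; rewrite nth_exps'; apply/eqP; rewrite -leqn0 leqNgt -mem_mult.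
    by apply/negP => j_in; apply: no_letter; exists j.+1, b; rewrite j_in ltnS lt_jc.
  by rewrite !arm_prefix_zeros ?size_behead ?size_mkseq //; apply: zeros.
have eq_pref b1 b2 :
    arm_prefix c (behead (exps w b1 N)) = arm_prefix c (behead (exps w b2 N)).
  by case: b1 b2 => [] [] //; rewrite agree.
set p := arm_prefix c (behead (exps w b N)).
have same b' k : k < size p -> mult w k.+1 b' = mult w k.+1 b.
  move=> lt_k; rewrite -!nth_exps'.
  have lt_k' : k < size (arm_prefix c (behead (exps w b' N))) by rewrite (eq_pref b' b).
  by rewrite -(nth_arm_prefix lt_k) -(nth_arm_prefix lt_k') (eq_pref b' b).
have [j [pos_j zero_j lt_j]] : exists j, [/\ 0 < nth 0 (behead (exps w b N)) j,
                                           nth 0 (behead (exps w b N)) j.+1 = 0 & j.+1 < size p].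
  apply: arm_prefix_peak; last by apply/ballot_last/ballot_behead; case: (b).
  have lt_tN : t < N by move/allP: w_lt => /(_ _ t_in).
  have lt_t : t.-1 < size p.
    apply: leq_trans (size_arm_prefix _ _); rewrite size_behead size_mkseq; lia.
  apply/hasP; exists (nth 0 p t.-1); first exact: mem_nth.
  by rewrite nth_arm_prefix // nth_exps' prednK // -mem_mult.
rewrite !nth_exps' in pos_j zero_j.
have in_j b' : (j.+1, b') \in w by rewrite mem_mult same // ltnW.
have := red_w j.+1 isT (in_j true) (in_j false).
by rewrite !mem_mult !same // zero_j.
Qed.

Section Blocks.

Variables (g : nat -> nat) (b : bool).

Definition block (s : seq nat) : word := flatten [seq nseq (g i) (i, b) | i <- s].

Lemma mem_block s a : a \in block s -> a.1 \in s /\ a.2 = b.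
Proof. by case/flatten_mapP => i i_s; rewrite mem_nseq => /andP[_ /eqP->]. Qed.

Lemma mult_block s k c :
  uniq s -> mult (block s) k c = if (c == b) && (k \in s) then g k else 0.
Proof.
elim: s => [|x s IH /andP[x_s /IH {}IH]]; first by rewrite in_nil andbF.
rewrite /block /= -/(block s) /mult count_cat count_nseq -/(mult (block s) k c) IH.
rewrite in_cons /= xpair_eqE; case: (eqVneq k x) => [->|//].
by rewrite (negbTE x_s) andbF [b == c]eq_sym; case: (c == b) => /=; lia.
Qed.

Lemma pairwise_block s :
  pairwise (fun i j => nf_order (i, b) (j, b)) s -> pairwise nf_order (block s).
Proof.
have refl_b i : nf_order (i, b) (i, b) by case: b; rewrite /nf_order /=.
elim: s => //= x s IH /andP[x_s /IH pw_s]; rewrite pairwise_cat pw_s andbT.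
apply/andP; split.
  apply/allrelP => a c; rewrite mem_nseq => /andP[_ /eqP->] /mem_block[].
  by case: c => j _ /= j_s ->; move/allP: x_s; apply.
by elim: (g x) => //= n ->; rewrite all_nseq refl_b orbT.
Qed.

End Blocks.

Lemma size_leaf_exps T : size (leaf_exps T) = (nodes T).+1.
Proof. by elim: T => //= l _ r IHr; rewrite size_cat size_lexp IHr addSn addnS. Qed.

Lemma assoc_wordE T1 T2 :
  let e := leaf_exps T1 in let f := leaf_exps T2 in
  assoc_word T1 T2 = block (nth 0 f) true (iota 0 (size f))
                     ++ block (nth 0 e) false (rev (iota 0 (size e))).
Proof. by []. Qed.

Lemma mult_assoc_word T1 T2 k b :
  mult (assoc_word T1 T2) k b = nth 0 (leaf_exps (if b then T2 else T1)) k.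
Proof.
rewrite assoc_wordE mult_cat !mult_block ?rev_uniq ?iota_uniq // mem_rev !mem_iota.
by case: b; rewrite /= ?addn0 //; case: ltnP => // le_size; rewrite nth_default.
Qed.

Lemma nf_inv_assoc_word T1 T2 : nodes T1 = nodes T2 ->
  nf_inv (assoc_word T1 T2) (nodes T1).+1
  /\ forall b, exps (assoc_word T1 T2) b (nodes T1).+1 = leaf_exps (if b then T2 else T1).
Proof.
move=> eq_n.
have exps_assoc b :
    exps (assoc_word T1 T2) b (nodes T1).+1 = leaf_exps (if b then T2 else T1).
  set T := if b then T2 else T1.
  have -> : (nodes T1).+1 = size (leaf_exps T).
    by rewrite size_leaf_exps /T; case: (b); rewrite ?eq_n.
  by rewrite -[RHS](mkseq_nth 0); apply: eq_mkseq => k; apply: mult_assoc_word.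
split=> //; split; rewrite ?exps_assoc ?ballot_leaf_exps //.
- rewrite assoc_wordE pairwise_cat !pairwise_block ?andbT.
  + by apply/allrelP => -[j ?] [k ?] /mem_block[_ /= ->] /mem_block[_ /= ->].
  + rewrite -[pairwise _ _]/(pairwise geq _) -sorted_pairwise ?rev_sorted ?iota_sorted //.
    by move=> y x z /= ? ?; lia.
  + rewrite -[pairwise _ _]/(pairwise leq _) -sorted_pairwise ?iota_sorted //.
    exact: leq_trans.
- rewrite assoc_wordE all_cat; apply/andP; split; apply/allP => a /mem_block[];
  by rewrite ?mem_rev mem_iota size_leaf_exps ?eq_n.
Qed.

Lemma rra_key_eq_iff_word c T1 T2 w' : nodes T1 = nodes T2 ->
  rtc red_step (assoc_word T1 T2) w' -> partially_reduced w' ->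
  (rra_key c T1 = rra_key c T2 <-> ~ exists t b, 1 <= t <= c /\ (t, b) \in w').
Proof.
move=> eq_n red pr_w'; have [inv exps_assoc] := nf_inv_assoc_word eq_n.
have [N' [inv' agree]] := nf_inv_rtc c inv red.
by rewrite -(exps_agree_iff c inv' pr_w') -agree /exps_agree !exps_assoc.
Qed.

Lemma d_RRA_defined_iff i1 irest T1 T2 : 0 < i1 -> sorted ltn (i1 :: irest) ->
  nodes T1 = nodes T2 ->
  d_RRA_defined (i1 :: irest) T1 T2 <-> rra_key i1.-1 T1 = rra_key i1.-1 T2.
Proof.
move=> i1_pos sorted_lv eq_n; split; first exact: rra_key_rtc.
exact: rra_connected.
Qed.

Unset Implicit Arguments.

Theorem lemma3p6 (i1 : nat) (irest : seq nat) (T1 T2 : tree) (w' : word) :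
  0 < i1 -> sorted ltn (i1 :: irest) ->
  nodes T1 = nodes T2 ->
  rtc red_step (assoc_word T1 T2) w' -> partially_reduced w' ->
  ((exists (t : nat) (b : bool), 1 <= t <= i1.-1 /\ (t, b) \in w') ->
      ~ d_RRA_defined (i1 :: irest) T1 T2) /\
  (~ (exists (t : nat) (b : bool), 1 <= t <= i1.-1 /\ (t, b) \in w') ->
      d_RRA_defined (i1 :: irest) T1 T2).
Proof.
move=> i1_pos sorted_lv eq_n red pr_w'.
rewrite (d_RRA_defined_iff i1_pos sorted_lv eq_n).
rewrite (rra_key_eq_iff_word i1.-1 eq_n red pr_w').
by split=> // letter; apply.
Qed.
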